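(* Let $d\geq 1$, $p\in[1,\infty)\setminus\{2\}$, and let $\bm{Q}_1,\bm{Q}_2$ be $d\times d$ symmetric positive definite matrices. For $\beta>0$ let $\bm{Q}(\beta)=\left(1+\frac{1}{\beta}\right)^{1/p}\bm{Q}_1+(1+\beta)^{1/p}\bm{Q}_2$. Then the function $\beta\mapsto\mathrm{trace}(\bm{Q}(\beta))$ on $(0,\infty)$ is minimized at $$\beta^*_{\mathrm{tr}}=\left(\frac{\mathrm{trace}(\bm{Q}_1)}{\mathrm{trace}(\bm{Q}_2)}\right)^{\frac{p}{1+p}}.$$ *)

From HB Require Import structures.
From mathcomp Require Import all_boot all_order all_algebra.
From mathcomp Require Import all_classical all_reals all_analysis.
Set Implicit Arguments. Unset Strict Implicit. Unset Printing Implicit Defensive.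
Import Order.TTheory GRing.Theory Num.Theory.
Local Open Scope ring_scope.

Definition symmetric_mx (R : realType) (d : nat) (A : 'M[R]_d) : Prop :=
  A^T = A.

Definition spd_mx (R : realType) (d : nat) (A : 'M[R]_d) : Prop :=
  symmetric_mx A /\
  forall x : 'cV[R]_d, x != 0 -> 0 < ((x^T *m A *m x) 0 0).

Definition Qbeta (R : realType) (d : nat) (p : R) (Q1 Q2 : 'M[R]_d) (beta : R)
  : 'M[R]_d :=
  ((1 + beta^-1) `^ (p^-1)) *: Q1 + ((1 + beta) `^ (p^-1)) *: Q2.

From HB Require Import structures.
From mathcomp Require Import all_boot all_order all_algebra.
From mathcomp Require Import all_classical all_reals all_analysis.
From mathcomp Require Import ring.

Set Implicit Arguments.
Unset Strict Implicit.
Unset Printing Implicit Defensive.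
Import Order.TTheory GRing.Theory Num.Theory.
Local Open Scope ring_scope.

(* With a = tr Q1, b = tr Q2, q = 1/p and r = 1 + q, the trace of Q(beta) is
   (1 + 1/beta)^q a + (1 + beta)^q b.  Writing a = x^r and b = y^r, and
   x + y = (1/c) (c x) + (1/e) (e y) with c = 1 + 1/beta, e = 1 + beta (so that
   1/c + 1/e = 1), convexity of t |-> t^r gives (x + y)^r <= c^q x^r + e^q y^r,
   with equality when c x = e y, i.e. beta = x / y = (a / b)^(1/r). *)

Lemma spd_diag_gt0 (R : realType) (d : nat) (Q : 'M[R]_d) (i : 'I_d) :
  spd_mx Q -> 0 < Q i i.
Proof.
move=> [_ Qpos].
have e_neq0 : delta_mx i 0 != 0 :> 'cV[R]_d.
  apply/eqP => /matrixP /(_ i 0); rewrite !mxE !eqxx /= => /eqP.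
  by rewrite oner_eq0.
by have := Qpos _ e_neq0; rewrite trmx_delta -rowE -colE !mxE.
Qed.

Lemma spd_tr_gt0 (R : realType) (d : nat) (Q : 'M[R]_d) :
  (0 < d)%N -> spd_mx Q -> 0 < \tr Q.
Proof.
move=> d_gt0 Qspd; rewrite /mxtrace (bigD1 (Ordinal d_gt0)) //=.
rewrite ltr_pwDl ?spd_diag_gt0 //.
by apply: sumr_ge0 => j _; exact/ltW/spd_diag_gt0.
Qed.

Lemma tr_Qbeta (R : realType) (d : nat) (p : R) (Q1 Q2 : 'M[R]_d) (beta : R) :
  \tr (Qbeta p Q1 Q2 beta) =
  (1 + beta^-1) `^ p^-1 * \tr Q1 + (1 + beta) `^ p^-1 * \tr Q2.
Proof. by rewrite /Qbeta mxtraceD !mxtraceZ. Qed.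

Section ConvexPower.
Variable R : realType.
Implicit Types a b c e q r w x y beta : R.

Lemma powR1D c q : 0 < c -> c `^ (1 + q) = c * c `^ q.
Proof. by move=> c_gt0; rewrite powRD ?powRr1 ?(gt_eqF c_gt0) ?implybT // ltW. Qed.

Lemma powRVK a r : 0 <= a -> r != 0 -> (a `^ r^-1) `^ r = a.
Proof. by move=> a_ge0 r_neq0; rewrite -powRrM mulVf // powRr1. Qed.

Lemma convex_powR2 r w x y : 1 <= r -> 0 <= w <= 1 -> 0 <= x -> 0 <= y ->
  (w * x + (1 - w) * y) `^ r <= w * x `^ r + (1 - w) * y `^ r.
Proof.
move=> r_ge1 /andP[w_ge0 w_le1] x_ge0 y_ge0.
have := @convex_powR R r r_ge1 (Itv01 w_ge0 w_le1) x y.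
rewrite !convRE /=; apply; rewrite inE /= in_itv /= andbT //.
Qed.

Lemma powR_add_le_conj c e q x y :
  0 < c -> 0 < e -> c^-1 + e^-1 = 1 -> 0 <= q -> 0 <= x -> 0 <= y ->
  (x + y) `^ (1 + q) <= c `^ q * x `^ (1 + q) + e `^ q * y `^ (1 + q).
Proof.
move=> c_gt0 e_gt0 ce1 q_ge0 x_ge0 y_ge0.
have eV : 1 - c^-1 = e^-1 by rewrite -ce1 addrC addKr.
have cV_itv : 0 <= c^-1 <= 1 by rewrite invr_ge0 ltW //= -ce1 lerDl invr_ge0 ltW.
have -> : x + y = c^-1 * (c * x) + (1 - c^-1) * (e * y).
  by rewrite eV !mulKf ?gt_eqF.
have r_ge1 : 1 <= 1 + q by rewrite lerDl.
have scale z u : 0 < z -> 0 <= u ->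
    z^-1 * (z * u) `^ (1 + q) = z `^ q * u `^ (1 + q).
  move=> z_gt0 u_ge0; rewrite powRM ?(ltW z_gt0) // powR1D //.
  by rewrite mulrA mulKf ?gt_eqF.
rewrite -[X in _ <= X + _]scale // -[X in _ <= _ + X]scale // -eV.
by apply: convex_powR2; rewrite // mulr_ge0 // ltW.
Qed.

Lemma powR_add_eq_conj q x y : 0 < x -> 0 < y ->
  ((x + y) / x) `^ q * x `^ (1 + q) + ((x + y) / y) `^ q * y `^ (1 + q)
  = (x + y) `^ (1 + q).
Proof.
move=> x_gt0 y_gt0; have xy_gt0 : 0 < x + y by rewrite addr_gt0.
have scale z : 0 < z -> ((x + y) / z) `^ q * z `^ (1 + q) = z * (x + y) `^ q.
  move=> z_gt0; rewrite powR1D // mulrCA -powRM ?divr_ge0 ?ltW //.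
  by rewrite mulfVK ?gt_eqF.
by rewrite !scale // -mulrDl powR1D.
Qed.

Lemma inv1DV_add_inv1D beta : 0 < beta -> (1 + beta^-1)^-1 + (1 + beta)^-1 = 1.
Proof.
move=> beta_gt0; field.
by rewrite gt_eqF ?addr_gt0 // gt_eqF.
Qed.

Lemma powR_weighted_sum_min a b q beta :
  0 < a -> 0 < b -> 0 <= q -> 0 < beta ->
  (1 + ((a / b) `^ (1 + q)^-1)^-1) `^ q * a + (1 + (a / b) `^ (1 + q)^-1) `^ q * b
  <= (1 + beta^-1) `^ q * a + (1 + beta) `^ q * b.
Proof.
move=> a_gt0 b_gt0 q_ge0 beta_gt0; set beta_star := (a / b) `^ _.
have r_neq0 : 1 + q != 0 by rewrite gt_eqF // ltr_pwDl.
set x := a `^ (1 + q)^-1; set y := b `^ (1 + q)^-1.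
have [x_gt0 y_gt0] : 0 < x /\ 0 < y by rewrite !powR_gt0.
have -> : beta_star = x / y.
  rewrite /beta_star powRM ?invr_ge0 ?ltW // -/x -(powR_inv1 (ltW b_gt0)).
  by rewrite powRAC powR_inv1 // powR_ge0.
have [-> ->] : a = x `^ (1 + q) /\ b = y `^ (1 + q) by rewrite !powRVK ?ltW.
have -> : 1 + (x / y)^-1 = (x + y) / x by rewrite invf_div; field; rewrite gt_eqF.
have -> : 1 + x / y = (x + y) / y by field; rewrite gt_eqF.
rewrite powR_add_eq_conj //.
apply: powR_add_le_conj; rewrite ?(ltW x_gt0) ?(ltW y_gt0) //.
- by rewrite addr_gt0 ?invr_gt0.
- by rewrite addr_gt0.
- exact: inv1DV_add_inv1D.
Qed.

End ConvexPower.

Theorem mainTheorem3 (R : realType) (d : nat) (p : R) (Q1 Q2 : 'M[R]_d)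
  (hd : (1 <= d)%N) (hp1 : 1 <= p) (hp2 : p != 2)
  (hQ1 : spd_mx Q1) (hQ2 : spd_mx Q2) :
  let beta_star := (\tr Q1 / \tr Q2) `^ (p / (1 + p)) in
  0 < beta_star /\
  forall beta : R, 0 < beta ->
    \tr (Qbeta p Q1 Q2 beta_star) <= \tr (Qbeta p Q1 Q2 beta).
Proof.
move=> beta_star.
have p_gt0 : 0 < p by apply: lt_le_trans hp1.
have a_gt0 := spd_tr_gt0 hd hQ1; have b_gt0 := spd_tr_gt0 hd hQ2.
split; first by rewrite powR_gt0 // divr_gt0.
move=> beta beta_gt0; rewrite !tr_Qbeta /beta_star.
have -> : p / (1 + p) = (1 + p^-1)^-1 by field; rewrite !gt_eqF ?addr_gt0.
by apply: powR_weighted_sum_min; rewrite ?invr_ge0 ?ltW.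
Qed.
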